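(* Let $E_1,E_2$ be vector spaces of the same finite dimension $n$ over a field $\mathbb{K}$, and let $\mathsf{P}(E_i)$ be the lattice of all subspaces of $E_i$. Then there is an injective map from the set $\mathbb{P}(E_1\otimes E_2)$ of one-dimensional subspaces of $E_1\otimes E_2$ to the set of atoms of $\mathsf{P}(E_1)\multimap\mathsf{P}(E_2):=(\mathsf{P}(E_1)\circledast\mathsf{P}(E_2)^{\mathrm{op}})^{\mathrm{op}}$.
   Context: Lattice notation: $\Sigma_i,\Sigma_i'$ atoms and coatoms; $\Sigma[a]$ atoms below $a$; $\mathsf{Cl}(\omega)=\{\Sigma[a];a\in\omega\}$; $\mathcal{L}^{\mathrm{op}}$ dual lattice. For complete atomistic coatomistic lattices $\mathcal{L}_1,\mathcal{L}_2$: $\Sigma'_\circledast$ is the set of $R\subsetneqq\Sigma_1\times\Sigma_2$ such that for all $(p_1,p_2)$, $\{q_1;(q_1,p_2)\in R\}\in\mathsf{Cl}(\Sigma_1'\cup\{1\})$ and $\{q_2;(p_1,q_2)\in R\}\in\mathsf{Cl}(\Sigma_2'\cup\{1\})$, and $\mathcal{L}_1\circledast\mathcal{L}_2:=\{\bigcap\omega;\omega\subseteq\Sigma'_\circledast\cup\{\Sigma_1\times\Sigma_2\}\}$ ordered by inclusion. *)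

From HB Require Import structures.
From mathcomp Require Import all_boot all_order all_algebra.
Set Implicit Arguments. Unset Strict Implicit. Unset Printing Implicit Defensive.
Import GRing.Theory.
Local Open Scope ring_scope.

(* Posets are given by a carrier predicate C and an order relation le. *)
Definition op_rel {A : Type} (le : A -> A -> Prop) : A -> A -> Prop :=
  fun x y => le y x.

Definition atomC {A : Type} (C : A -> Prop) (le : A -> A -> Prop) (a : A) : Prop :=
  C a /\ ~ (forall y, C y -> le a y) /\
  forall x, C x -> le x a -> ~ le a x -> forall y, C y -> le x y.

Definition atom {A : Type} (le : A -> A -> Prop) (a : A) : Prop :=
  atomC (fun _ => True) le a.
Definition coatom {A : Type} (le : A -> A -> Prop) (a : A) : Prop :=
  atom (op_rel le) a.
Definition is_top {A : Type} (le : A -> A -> Prop) (t : A) : Prop :=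
  forall x, le x t.

Definition below {A : Type} (le : A -> A -> Prop) (a : A) : A -> Prop :=
  fun p => atom le p /\ le p a.

Definition in_Cl_coatom_top {A : Type} (le : A -> A -> Prop) (S : A -> Prop) : Prop :=
  exists a, (coatom le a \/ is_top le a) /\ forall q, S q <-> below le a q.

Definition SigmaProd {A1 A2 : Type} (le1 : A1 -> A1 -> Prop) (le2 : A2 -> A2 -> Prop)
  : A1 * A2 -> Prop := fun x => atom le1 x.1 /\ atom le2 x.2.

Definition subsetP {A : Type} (X Y : A -> Prop) : Prop := forall x, X x -> Y x.

Definition SigmaAst' {A1 A2 : Type} (le1 : A1 -> A1 -> Prop) (le2 : A2 -> A2 -> Prop)
  (R : A1 * A2 -> Prop) : Prop :=
  subsetP R (SigmaProd le1 le2) /\ R <> SigmaProd le1 le2 /\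
  forall p1 p2, atom le1 p1 -> atom le2 p2 ->
    in_Cl_coatom_top le1 (fun q1 => R (q1, p2)) /\
    in_Cl_coatom_top le2 (fun q2 => R (p1, q2)).

(* elements of L1 (circledast) L2 : intersections of subfamilies of
   Sigma'_circledast \cup {Sigma1 x Sigma2}, ordered by inclusion
   (the empty intersection being Sigma1 x Sigma2). *)
Definition tensor_elt {A1 A2 : Type} (le1 : A1 -> A1 -> Prop) (le2 : A2 -> A2 -> Prop)
  (X : A1 * A2 -> Prop) : Prop :=
  exists omega : (A1 * A2 -> Prop) -> Prop,
    (forall R, omega R -> SigmaAst' le1 le2 R \/ R = SigmaProd le1 le2) /\
    X = (fun x => SigmaProd le1 le2 x /\ forall R, omega R -> R x).

(* atoms of L1 -o L2 := (L1 (circledast) L2^op)^op *)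
Definition multimap_atom {A1 A2 : Type} (le1 : A1 -> A1 -> Prop) (le2 : A2 -> A2 -> Prop)
  (X : A1 * A2 -> Prop) : Prop :=
  atomC (tensor_elt le1 (op_rel le2)) (op_rel subsetP) X.

Definition subspace_le {K : fieldType} {E : vectType K} (U V : {vspace E}) : Prop :=
  (U <= V)%VS.

(* Tensor product E1 (x) E2, modelled (basis-free) as Hom(E1^*, E2). *)
Definition tensorV (K : fieldType) (E1 E2 : vectType K) : vectType K :=
  'Hom('Hom(E1, K^o), E2).

(* Identify [E1 (x) E2 = Hom(E1^*, E2)] with [Hom(E1, E2)] through a linear
   isomorphism [E1 ~ E1^*], and send the line spanned by a nonzero [g] to
     [R_g := {(p, H) | p a point of E1, H a hyperplane of E2, g(p) <= H}].
   The fibres of [R_g] are the points of [g^-1(H)] (a hyperplane or the whole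
   space) and the hyperplanes through [g(p)] (a point or zero), so [R_g] lies in
   Sigma'_circledast.  It is maximal there: if [R] in Sigma'_circledast
   contains [R_g] and some [(<[u0]>, H0)] with [g u0 
otin H0], then the fibre
   of [R] over [<[u0]>] contains every hyperplane, hence the fibre over every
   hyperplane missing [g u0] contains every point, hence the fibre over every
   point contains every hyperplane, i.e. [R] is the whole product.  As every
   element of the lattice is an intersection of members of Sigma'_circledast,
   [R_g] is an atom of [P(E1) -o P(E2)].  Finally [R_g] determines the line of
   [g]: [R_g = R_g'] forces [g' u \in <[g u]>] for all [u], hence [g' \in K g]. *)

From Pilot Require Import Defs.
From HB Require Import structures.
From mathcomp Require Import all_boot all_order all_algebra.
From Stdlib Require Import FunctionalExtensionality PropExtensionality.
Set Implicit Arguments. Unset Strict Implicit. Unset Printing Implicit Defensive.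
Import GRing.Theory.
Local Open Scope ring_scope.

Lemma subsetP_antisym (A : Type) (X Y : A -> Prop) :
  Defs.subsetP X Y -> Defs.subsetP Y X -> X = Y.
Proof.
move=> XY YX; apply: functional_extensionality => x.
by apply: propositional_extensionality; split; [apply: XY | apply: YX].
Qed.

Section MultimapAtom.
Variables (A1 A2 : Type) (le1 : A1 -> A1 -> Prop) (le2 : A2 -> A2 -> Prop).
Local Notation Sigma := (SigmaProd le1 (op_rel le2)).
Local Notation SigmaAst := (SigmaAst' le1 (op_rel le2)).
Local Notation tensor := (tensor_elt le1 (op_rel le2)).

Lemma tensor_elt_Sigma : tensor Sigma.
Proof.
exists (fun _ => False); split=> //.
by apply: subsetP_antisym => [x Sx | x []].
Qed.

Lemma tensor_elt_sub X : tensor X -> Defs.subsetP X Sigma.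
Proof. by move=> [om [_ ->]] x []. Qed.

Lemma tensor_elt_SigmaAst X : SigmaAst X -> tensor X.
Proof.
move=> X_Ast; exists (eq^~ X); split=> [R -> | ]; first by left.
apply: subsetP_antisym => [x Xx | x [_]]; last exact.
by split=> [|R ->]; [exact: X_Ast.1|].
Qed.

Lemma multimap_atom_of_maximal X : SigmaAst X ->
  (forall R, SigmaAst R -> Defs.subsetP X R -> Defs.subsetP R X) ->
  multimap_atom le1 le2 X.
Proof.
move=> X_Ast X_max; have [XS [X_neq _]] := X_Ast.
split; first exact: tensor_elt_SigmaAst.
split.
  move=> /(_ Sigma tensor_elt_Sigma) SX.
  by apply: X_neq; apply: subsetP_antisym.
move=> _ [om [omP ->]] Xx nxX y /tensor_elt_sub yS z yz; split; first exact: yS.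
move=> R omR; case: (omP R omR) => [R_Ast | ->]; last exact: yS.
have XR : Defs.subsetP X R by move=> v /Xx [_ /(_ R omR)].
by exfalso; apply: nxX => w [_ /(_ R omR) Rw]; apply: X_max XR w Rw.
Qed.

End MultimapAtom.

Section Subspaces.
Variables (K : fieldType) (V : vectType K).
Implicit Types (U W H : {vspace V}) (u v x y z : V).
Local Notation atomV := (atom (@subspace_le K V)).
Local Notation coatomV := (coatom (@subspace_le K V)).

Lemma vline_sym x y : x \in <[y]>%VS -> x != 0 -> y \in <[x]>%VS.
Proof.
move=> /vlineP [k ->]; rewrite scaler_eq0 negb_or => /andP [k0 _].
by apply/vlineP; exists k^-1; rewrite scalerA mulVf ?scale1r.
Qed.

Lemma subv_vline_notin_eq0 v U H :
  v \notin H -> (U <= <[v]>)%VS -> (U <= H)%VS -> U = 0%VS.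
Proof.
move=> vH Uv UH; apply/eqP; rewrite -subv0; apply/subvP => z zU; rewrite memv0.
apply: contraNT vH => z0; rewrite memvE (subv_trans _ UH) // (subv_trans _ zU) //.
by rewrite -memvE vline_sym // (subvP Uv).
Qed.

Lemma vline_atom u : u != 0 -> atomV <[u]>%VS.
Proof.
move=> u0; split=> //; split.
  by move=> /(_ 0%VS I); rewrite /subspace_le -memvE memv0 (negPf u0).
move=> x _ xu /negP ux y _.
by rewrite /subspace_le (subv_vline_notin_eq0 ux xu (subvv x)) sub0v.
Qed.

Lemma atom_vline p : atomV p -> exists2 u, u != 0 & p = <[u]>%VS.
Proof.
move=> [_ [p_nbot p_min]].
have p0 : p != 0%VS.
  by apply/eqP => p0; apply: p_nbot => y _; rewrite /subspace_le p0 sub0v.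
exists (vpick p); first by rewrite vpick0.
have sub_p : (<[vpick p]> <= p)%VS by rewrite -memvE memv_pick.
case: (boolP (p <= <[vpick p]>)%VS) => [sup_p | /negP np].
  by apply/eqP; rewrite eqEsubv sup_p sub_p.
have := p_min _ I sub_p np 0%VS I.
by rewrite /subspace_le -memvE memv0 vpick0 (negPf p0).
Qed.

Lemma coatom_addv_line H v : coatomV H -> v \notin H -> (H + <[v]>)%VS = fullv.
Proof.
move=> [_ [_ H_max]] vH; apply/eqP; rewrite eqEsubv subvf /=.
apply: (H_max _ I (addvSl H _)) fullv I.
by rewrite /op_rel /subspace_le subv_add subvv -memvE; apply/negP.
Qed.

Lemma addv_line_coatom H v : v \notin H -> (H + <[v]>)%VS = fullv -> coatomV H.
Proof.
move=> vH Hv; split=> //; split.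
  move=> /(_ fullv I); rewrite /op_rel /subspace_le => /subvP /(_ v (memvf v)).
  exact/negP.
move=> x _; rewrite /op_rel /subspace_le => Hx /negP /subvPn [z zx zH] y _.
have /memv_addP [h hH [w wv zE]] : z \in (H + <[v]>)%VS by rewrite Hv memvf.
have w0 : w != 0 by apply: contraNneq zH => w0; rewrite zE w0 addr0.
have wx : w \in x.
  have -> : w = z - h by rewrite zE addrAC subrr add0r.
  by rewrite memvB // (subvP Hx).
have vx : v \in x by rewrite memvE (subv_trans _ wx) // -memvE vline_sym.
by rewrite (subv_trans (subvf y)) // -Hv subv_add Hx -memvE.
Qed.

Lemma coatom_separation W v : v \notin W ->
  exists H, [/\ coatomV H, (W <= H)%VS & v \notin H].
Proof.
move=> vW; pose C := ((W + <[v]>)^C)%VS.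
have vWC : v \notin (W + C)%VS.
  apply: contra vW => /memv_addP [w wW [c cC vE]].
  suff c0 : c = 0 by rewrite vE c0 addr0.
  apply/eqP; rewrite -memv0 -(capv_compl (W + <[v]>)) memv_cap cC andbT.
  have -> : c = v - w by rewrite vE addrAC subrr add0r.
  by rewrite memvB // ?(subvP (addvSr _ _) _ (memv_line v)) ?(subvP (addvSl _ _)).
exists (W + C)%VS; split=> //; last exact: addvSl.
by apply: addv_line_coatom vWC _; rewrite -addvA [(C + _)%VS]addvC addvA addv_complf.
Qed.

(* A hyperplane containing [x - y] but not [y] cannot contain [x]. *)
Lemma coatom_avoid2 x y : y != 0 -> x \notin <[y]>%VS ->
  exists H, [/\ coatomV H, y \notin H & x \notin H].
Proof.
move=> y0 xy.
have y_xy : y \notin <[x - y]>%VS.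
  apply: contra xy => /vline_sym /(_ y0) xyy.
  by rewrite -(subrK y x) memvD // memv_line.
have [H [cH xyH yH]] := coatom_separation y_xy.
exists H; split=> //; apply: contra yH => xH.
have -> : y = x - (x - y) by rewrite opprB addrC subrK.
by rewrite memvB // (subvP xyH) // memv_line.
Qed.

Lemma subv_coatoms_sup U W :
  (forall H, coatomV H -> (W <= H)%VS -> (U <= H)%VS) -> (U <= W)%VS.
Proof.
move=> UH; apply/subvP => z zU; apply: contraT => zW.
have [H [cH WH zH]] := coatom_separation zW.
by rewrite (subvP (UH H cH WH)) in zH.
Qed.

Lemma subv_coatoms_notin U v : v != 0 ->
  (forall H, coatomV H -> v \notin H -> (U <= H)%VS) -> (U <= <[v]>)%VS.
Proof.
move=> v0 UH; apply/subvP => z zU; apply: contraT => zv.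
have [H [cH vH zH]] := coatom_avoid2 v0 zv.
by rewrite (subvP (UH H cH vH)) in zH.
Qed.
End Subspaces.

Section LinearMaps.
Variables (K : fieldType) (V W : vectType K).
Implicit Types (f g : 'Hom(V, W)) (U : {vspace V}) (H : {vspace W}).

Lemma limg_sub_preim f U H : (f @: U <= H)%VS = (U <= f @^-1: H)%VS.
Proof.
apply/subvP/subvP => [fUH u uU | UfH _ /memv_imgP [u uU ->]].
  by rewrite -memv_preim fUH // memv_img.
by rewrite memv_preim UfH.
Qed.

Lemma coatom_preim f H : coatom (@subspace_le K W) H ->
  coatom (@subspace_le K V) (f @^-1: H)%VS \/ (f @^-1: H)%VS = fullv.
Proof.
move=> cH; have [full_preim | /subvPn [u _]] := boolP (fullv <= f @^-1: H)%VS.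
  by right; apply/eqP; rewrite eqEsubv subvf.
rewrite -memv_preim => fuH; left; apply: (addv_line_coatom (v := u)).
  by rewrite -memv_preim.
apply/eqP; rewrite eqEsubv subvf; apply/subvP => w _.
have /memv_addP [h hH [_ /vlineP [k ->] fwE]] : f w \in (H + <[f u]>)%VS.
  by rewrite coatom_addv_line ?memvf.
have -> : w = (w - k *: u) + k *: u by rewrite subrK.
rewrite memv_add ?memvZ ?memv_line // -memv_preim linearB linearZ /= fwE.
by rewrite addrK.
Qed.

Lemma lincomb2_eq0 (x y : W) (a b : K) :
  y != 0 -> x \notin <[y]>%VS -> a *: x + b *: y = 0 -> a = 0 /\ b = 0.
Proof.
move=> y0 xy e.
have a0 : a = 0.
  apply: contraNeq xy => a0.
  have ax : a *: x = - (b *: y) by rewrite -(addrK (b *: y) (a *: x)) e sub0r.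
  have -> : x = a^-1 *: (- (b *: y)) by rewrite -ax scalerA mulVf ?scale1r.
  by rewrite memvZ // memvN memvZ // memv_line.
split=> //; apply/eqP; move: e; rewrite a0 scale0r add0r => /eqP.
by rewrite scaler_eq0 (negPf y0) orbF.
Qed.

Lemma lfun_collinear f g : f != 0 -> (forall u, g u \in <[f u]>%VS) ->
  exists c, g = c *: f.
Proof.
move=> /lfunPn [u0]; rewrite zero_lfunE => fu0 g_f.
have /vlineP [c gu0] := g_f u0.
exists c; apply/lfunP => u; rewrite lfunE /=.
have [/vlineP [a fu] | fu_u0] := boolP (f u \in <[f u0]>%VS).
  have f0 : f (u - a *: u0) = 0 by rewrite raddfB /= linearZ /= fu subrr.
  have /vlineP [k] := g_f (u - a *: u0).
  rewrite f0 scaler0 raddfB /= linearZ /= => /eqP.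
  by rewrite subr_eq0 => /eqP ->; rewrite gu0 fu !scalerA mulrC.
have /vlineP [l] := g_f (u + u0).
have /vlineP [m gu] := g_f u.
rewrite !raddfD /= gu gu0 => /eqP; rewrite -subr_eq0 => /eqP e.
have [/eqP ml /eqP cl] : m - l = 0 /\ c - l = 0.
  by apply: lincomb2_eq0 fu0 fu_u0 _; rewrite !scalerBl addrACA -opprD.
by move: ml cl; rewrite !subr_eq0 => /eqP -> /eqP ->.
Qed.
End LinearMaps.

Section HomRelation.
Variables (K : fieldType) (E1 E2 : vectType K).
Local Notation le1 := (@subspace_le K E1).
Local Notation le2 := (@subspace_le K E2).
Local Notation Sigma := (SigmaProd le1 (op_rel le2)).
Implicit Types (g : 'Hom(E1, E2)) (p : {vspace E1}) (q : {vspace E2}).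

Definition hom_rel g (x : {vspace E1} * {vspace E2}) : Prop :=
  Sigma x /\ (g @: x.1 <= x.2)%VS.

Lemma hom_rel_vline g u q :
  u != 0 -> hom_rel g (<[u]>%VS, q) <-> coatom le2 q /\ g u \in q.
Proof.
move=> u0; rewrite /hom_rel /SigmaProd /= limg_line -memvE.
by split=> [[[_ cq] guq] | [cq guq]] //; split=> //; split=> //; apply: vline_atom.
Qed.

Lemma hom_rel_neq_Sigma g : g != 0 -> hom_rel g <> Sigma.
Proof.
move=> /lfunPn [u]; rewrite zero_lfunE => gu0.
have u0 : u != 0 by apply: contraNneq gu0 => ->; rewrite linear0.
have gu_notin0 : g u \notin (0 : {vspace E2})%VS by rewrite memv0.
have [H [cH _ guH]] := coatom_separation gu_notin0.
move=> g_Sigma; have : Sigma (<[u]>%VS, H) by split=> //; apply: vline_atom.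
by rewrite -g_Sigma => /(hom_rel_vline _ _ u0) [_]; rewrite (negPf guH).
Qed.

Lemma hom_rel_SigmaAst g : g != 0 -> SigmaAst' le1 (op_rel le2) (hom_rel g).
Proof.
move=> g0; split; first by move=> x [].
split; first exact: hom_rel_neq_Sigma.
move=> p1 p2 ap1 cp2; split.
  exists (g @^-1: p2)%VS; split.
    have [c_preim | full_preim] := coatom_preim g cp2; first by left.
    by right => x; rewrite /subspace_le full_preim subvf.
  by move=> p; rewrite /hom_rel /below /subspace_le -limg_sub_preim; split=> [[[]]|[]].
have [u u0 ->] := atom_vline ap1.
exists <[g u]>%VS; split.
  have [-> | gu0] := eqVneq (g u) 0; last by left; apply: vline_atom.
  by right => x; rewrite /op_rel /subspace_le -memvE mem0v.
by move=> q; rewrite hom_rel_vline // /below /op_rel /subspace_le -memvE.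
Qed.

Lemma hom_rel_inj g g' : g != 0 -> hom_rel g = hom_rel g' -> exists c, g' = c *: g.
Proof.
move=> g0 gg'; apply: lfun_collinear g0 _ => u.
have [-> | u0] := eqVneq u 0; first by rewrite linear0 mem0v.
apply: contraT => g'u; have [H [cH guH g'uH]] := coatom_separation g'u.
have : hom_rel g (<[u]>%VS, H) by apply/hom_rel_vline; rewrite // memvE.
by rewrite gg' => /(hom_rel_vline _ _ u0) [_]; rewrite (negPf g'uH).
Qed.
End HomRelation.

Section StrictlyAboveHomRel.
Variables (K : fieldType) (E1 E2 : vectType K) (g : 'Hom(E1, E2)).
Variable R : {vspace E1} * {vspace E2} -> Prop.
Local Notation le1 := (@subspace_le K E1).
Local Notation le2 := (@subspace_le K E2).
Hypotheses (R_Ast : SigmaAst' le1 (op_rel le2) R) (g_R : Defs.subsetP (hom_rel g) R).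
Variables (u0 : E1) (H0 : {vspace E2}).
Hypotheses (u0_neq0 : u0 != 0) (H0_coatom : coatom le2 H0).
Hypotheses (R_u0H0 : R (<[u0]>%VS, H0)) (gu0_H0 : g u0 \notin H0).

Let R_fiber_left q : coatom le2 q ->
  exists b : {vspace E1}, forall p, R (p, q) <-> atom le1 p /\ (p <= b)%VS.
Proof.
move=> cq; have [_ [_ R_Cl]] := R_Ast.
by have [[b [_ bE]] _] := R_Cl _ _ (vline_atom u0_neq0) cq; exists b.
Qed.

Let R_fiber_right p : atom le1 p ->
  exists a : {vspace E2}, forall q, R (p, q) <-> coatom le2 q /\ (a <= q)%VS.
Proof.
move=> ap; have [_ [_ R_Cl]] := R_Ast.
by have [_ [a [_ aE]]] := R_Cl _ _ ap H0_coatom; exists a.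
Qed.

Let R_hom_vline u q : u != 0 -> coatom le2 q -> g u \in q -> R (<[u]>%VS, q).
Proof. by move=> u_neq0 cq guq; apply: g_R; apply/hom_rel_vline. Qed.

Let R_u0 q : coatom le2 q -> R (<[u0]>%VS, q).
Proof.
have [a aE] := R_fiber_right (vline_atom u0_neq0).
have aH0 : (a <= H0)%VS by have [] := (aE H0).1 R_u0H0.
have a_gu0 : (a <= <[g u0]>)%VS.
  apply: subv_coatoms_sup => H cH; rewrite -memvE => gu0H.
  by have [] := (aE H).1 (R_hom_vline u0_neq0 cH gu0H).
move=> cq; apply/aE; split=> //.
by rewrite (subv_vline_notin_eq0 gu0_H0 a_gu0 aH0) sub0v.
Qed.

Let R_full_of_notin q : coatom le2 q -> g u0 \notin q ->
  forall p, atom le1 p -> R (p, q).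
Proof.
move=> cq gu0q p ap; have [b bE] := R_fiber_left cq.
suff b_full : (fullv <= b)%VS by apply/bE; rewrite (subv_trans (subvf p)).
have u0b : u0 \in b by have [] := (bE _).1 (R_u0 cq).
apply/subvP => w _.
have /memv_addP [h hq [_ /vlineP [k ->] gwE]] : g w \in (q + <[g u0]>)%VS.
  by rewrite coatom_addv_line ?memvf.
have -> : w = (w - k *: u0) + k *: u0 by rewrite subrK.
rewrite memvD ?memvZ //.
have [-> | w_neq0] := eqVneq (w - k *: u0) 0; first exact: mem0v.
suff : R (<[w - k *: u0]>%VS, q) by move=> /bE [].
apply: R_hom_vline w_neq0 cq _.
by rewrite raddfB /= linearZ /= gwE addrK.
Qed.

Let R_full p q : atom le1 p -> coatom le2 q -> R (p, q).
Proof.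
move=> ap cq; have [a aE] := R_fiber_right ap.
have aH0 : (a <= H0)%VS.
  by have [] := (aE H0).1 (R_full_of_notin H0_coatom gu0_H0 ap).
have a_gu0 : (a <= <[g u0]>)%VS.
  have gu0_neq0 : g u0 != 0 by apply: contraNneq gu0_H0 => ->; rewrite mem0v.
  apply: subv_coatoms_notin gu0_neq0 _ => H cH gu0H.
  by have [] := (aE H).1 (R_full_of_notin cH gu0H ap).
apply/aE; split=> //.
by rewrite (subv_vline_notin_eq0 gu0_H0 a_gu0 aH0) sub0v.
Qed.
Lemma eq_Sigma_of_strictly_above_hom_rel : R = SigmaProd le1 (op_rel le2).
Proof. by apply: subsetP_antisym R_Ast.1 _ => -[p q] []; apply: R_full. Qed.
End StrictlyAboveHomRel.

Lemma hom_rel_maximal (K : fieldType) (E1 E2 : vectType K) (g : 'Hom(E1, E2)) R :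
  SigmaAst' (@subspace_le K E1) (op_rel (@subspace_le K E2)) R ->
  Defs.subsetP (hom_rel g) R -> Defs.subsetP R (hom_rel g).
Proof.
move=> R_Ast g_R [p q] Rpq.
have [ap cq] : atom (@subspace_le K E1) p /\ coatom (@subspace_le K E2) q.
  exact: R_Ast.1 _ Rpq.
split=> //; apply: contraT => /= gpq; exfalso.
have [u0 u0_neq0 p_u0] := atom_vline ap.
rewrite p_u0 limg_line -memvE in gpq; rewrite p_u0 in Rpq.
apply: R_Ast.2.1.
exact: (eq_Sigma_of_strictly_above_hom_rel (u0 := u0) R_Ast g_R u0_neq0 cq Rpq gpq).
Qed.

Lemma lfun_onto_exists (K : fieldType) (V W : vectType K) :
  \dim {:V} = \dim {:W} -> exists f : 'Hom(V, W), limg f = fullv.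
Proof.
move=> dimVW; have [f fE] := linear_of_free (vbasis {:V}) (vbasis {:W}).
exists (linfun f); rewrite -(span_basis (vbasisP {:V})) limg_span.
rewrite (eq_map (lfunE f)) fE; first exact: span_basis (vbasisP _).
  exact: basis_free (vbasisP _).
by rewrite !size_tuple.
Qed.

Lemma comp_lfun_onto_inj (K : fieldType) (U V W : vectType K) (i : 'Hom(U, V))
  (t t' : 'Hom(V, W)) : limg i = fullv -> (t \o i = t' \o i)%VF -> t = t'.
Proof.
move=> i_onto tt'; apply/lfunP => v.
have /memv_imgP [u _ ->] : v \in limg i by rewrite i_onto memvf.
by rewrite -!comp_lfunE tt'.
Qed.

Lemma vline_vpick_dim1 (K : fieldType) (V : vectType K) (U : {vspace V}) :
  \dim U = 1%N -> U = <[vpick U]>%VS.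
Proof.
move=> dU; apply/eqP; rewrite eq_sym eqEdim -memvE memv_pick dim_vline dU.
by rewrite vpick0 -dimv_eq0 dU.
Qed.

Theorem theorem8p6 (K : fieldType) (n : nat) (E1 E2 : vectType K)
  (h1 : \dim {: E1} = n) (h2 : \dim {: E2} = n) :
  exists f : {vspace tensorV E1 E2} -> ({vspace E1} * {vspace E2} -> Prop),
    (forall U, \dim U = 1%N ->
       multimap_atom (@subspace_le K E1) (@subspace_le K E2) (f U)) /\
    (forall U V, \dim U = 1%N -> \dim V = 1%N -> f U = f V -> U = V).
Proof.
have dim_dual : \dim {:E1} = \dim {:'Hom(E1, K^o)}.
  by rewrite !dimvf /dim /= muln1.
have [i i_onto] := lfun_onto_exists dim_dual.
have gen_neq0 (U : {vspace tensorV E1 E2}) : \dim U = 1%N -> (vpick U \o i)%VF != 0.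
  move=> dU; have : vpick U != 0 by rewrite vpick0 -dimv_eq0 dU.
  apply: contra_neq => ti0; apply: comp_lfun_onto_inj i_onto _.
  by rewrite ti0 comp_lfun0l.
exists (fun U => hom_rel (vpick U \o i)%VF); split=> [U dU | U V dU dV].
  apply: multimap_atom_of_maximal; last exact: hom_rel_maximal.
  exact: hom_rel_SigmaAst (gen_neq0 U dU).
case/(hom_rel_inj (gen_neq0 U dU)) => c; rewrite comp_lfunZl.
move=> /(comp_lfun_onto_inj i_onto) VU.
apply/eqP; rewrite eq_sym eqEdim dU dV leqnn andbT (vline_vpick_dim1 dV) -memvE.
by rewrite VU memvZ ?memv_pick.
Qed.
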